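(* Let $H$ be a 2-dimensional non-abelian simply connected Lie group, $u,w$ a basis of left-invariant vector fields with $[u,w]=2u$, and for real $a,b$ with $ab=0$ let $\nabla=\nabla(a,b)$ be the left-invariant torsion-free connection on $H$ with $\nabla_u u=(3+a)u-aw$, $\nabla_u w=au+(3-a)w$, $\nabla_w u=(a-2)u+(3-a)w$, $\nabla_w w=(a+b-1)u+(2-a)w$. If a left-invariant symmetric 2-tensor on $H$ equals $\mathcal{L}\beta$ for some 1-form $\beta$ on $H$, then it also equals $\mathcal{L}\alpha$ for some left-invariant 1-form $\alpha$ on $H$.
   Context: All objects are $C^\infty$. $\mathcal{L}$ is the Killing operator of $\nabla$: $(\mathcal{L}\xi)(x,y)=\tfrac12[(\nabla_x\xi)(y)+(\nabla_y\xi)(x)]$ for 1-forms $\xi$. *)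

From HB Require Import structures.
From mathcomp Require Import all_boot all_order all_algebra.
From mathcomp Require Import all_classical all_reals all_analysis.
Set Implicit Arguments. Unset Strict Implicit. Unset Printing Implicit Defensive.
Import Order.TTheory GRing.Theory Num.Theory.
Import numFieldNormedType.Exports.
Local Open Scope ring_scope.

(* Concrete model of the 2-dim non-abelian simply connected Lie group H:
   H = R^2 with law (x,y).(x',y') = (x + e^{2y} x', y + y').
   Left-invariant fields: u = e^{2y} d/dx, w = - d/dy, so [u,w] = 2u. *)

Section Defs.
Variable R : realType.

Definition partial1 (f : R -> R -> R) : R -> R -> R :=
  fun x y => derive1 (fun t => f t y) x.
Definition partial2 (f : R -> R -> R) : R -> R -> R :=
  fun x y => derive1 (fun t => f x t) y.

Fixpoint iter_partial (s : seq bool) (f : R -> R -> R) : R -> R -> R :=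
  match s with
  | [::] => f
  | b :: s' => (if b then partial1 else partial2) (iter_partial s' f)
  end.

Definition smooth2 (f : R -> R -> R) : Prop :=
  forall s : seq bool,
    (forall x y, derivable (fun t => iter_partial s f t y) x 1 /\
                 derivable (fun t => iter_partial s f x t) y 1) /\
    continuous (fun p : R * R => iter_partial s f p.1 p.2).

(* frame index: true = u, false = w *)
Definition frameD (i : bool) (h : R -> R -> R) : R -> R -> R :=
  if i then (fun x y => expR (2 * y) * partial1 h x y)
  else (fun x y => - partial2 h x y).

(* coefficients (in the frame u,w) of nabla_{e_i} e_j for nabla(a,b) *)
Definition nabla_coef (a b : R) (i j : bool) : R * R :=
  match i, j with
  | true, true => (3 + a, - a)
  | true, false => (a, 3 - a)
  | false, true => (a - 2, 3 - a)
  | false, false => (a + b - 1, 2 - a)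
  end.

(* a 1-form beta is given by its components f = beta(u), g = beta(w) *)
Definition beta_comp (f g : R -> R -> R) (j : bool) : R -> R -> R :=
  if j then f else g.

Definition covD (a b : R) (f g : R -> R -> R) (i j : bool) (x y : R) : R :=
  frameD i (beta_comp f g j) x y
  - ((nabla_coef a b i j).1 * f x y + (nabla_coef a b i j).2 * g x y).

Definition killing (a b : R) (f g : R -> R -> R) (i j : bool) (x y : R) : R :=
  (covD a b f g i j x y + covD a b f g j i x y) / 2.

End Defs.

From HB Require Import structures.
From mathcomp Require Import all_boot all_order all_algebra.
From mathcomp Require Import all_classical all_reals all_analysis.
From mathcomp Require Import ring lra.
Import Order.TTheory GRing.Theory Num.Theory.
Import numFieldNormedType.Exports.
Local Open Scope ring_scope.

(* Write beta = f u^* + g w^* in the left-invariant frame u = e^{2y} d/dx,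
   w = - d/dy, and put p = d f/dy = - w f.  The Killing equation expresses
   u f, w g and u g as affine functions of f, g and p.  Applying the bracket
   [u, w] = 2u to f, g and p closes the system and yields an affine relation
   12 p = ... in f and g; differentiating that relation along u and w gives
   two linear relations between f and g, whose determinant is, when ab = 0,
   a nonzero multiple of 45 + 5a + 3b.  If this number is nonzero, f and g are
   constant.  Otherwise (a, b) is (0, -15) or (-9, 0), and the two relations
   at a single point reduce to the linear condition on S under which an
   explicit invariant solution exists. *)

Section MixedPartials.
Context {R : realType}.

Lemma MVT_derive1 (phi : R -> R) a k : 0 < k -> (forall x, derivable phi x 1) ->
  exists2 c, c \in `]a, a + k[ & phi (a + k) - phi a = derive1 phi c * k.
Proof.
move=> k0 dphi; have ak : a < a + k by rewrite ltrDl.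
have [c cI ->] := MVT ak (fun x _ => derivableP (dphi x))
  (derivable_within_continuous (fun x _ => dphi x)).
by exists c; rewrite // derive1E addrAC subrr add0r.
Qed.

Lemma derive1B {u v : R -> R} {x : R} : derivable u x 1 -> derivable v x 1 ->
  derive1 (fun t => u t - v t) x = derive1 u x - derive1 v x.
Proof.
move=> /derivableP du /derivableP dv.
by rewrite !derive1E; apply: derive_val.
Qed.

Lemma in_itv_ball {x d z : R} : z \in `]x, x + d[ -> ball x d z.
Proof.
rewrite ball_itv !in_itv /= => /andP[xz zd]; apply/andP; split=> //.
by rewrite bnd_simp; lra.
Qed.

Section Rectangle.
Variable h : R -> R -> R.
Hypotheses (dh1 : forall x y, derivable (fun t => h t y) x 1)
  (dh2 : forall x y, derivable (fun t => h x t) y 1)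
  (dh12 : forall x y, derivable (fun t => partial1 h x t) y 1)
  (dh21 : forall x y, derivable (fun t => partial2 h t y) x 1).

Lemma mixed_partials_square x0 y0 k : 0 < k ->
  exists xi eta xi' eta',
    [/\ xi \in `]x0, x0 + k[, eta \in `]y0, y0 + k[, xi' \in `]x0, x0 + k[,
        eta' \in `]y0, y0 + k[ &
        partial2 (partial1 h) xi eta = partial1 (partial2 h) xi' eta'].
Proof.
move=> k0.
have [xi xiI E1] := MVT_derive1 (fun t => h t (y0 + k) - h t y0) x0 k k0
  (fun x => derivableB (dh1 x (y0 + k)) (dh1 x y0)).
have [eta etaI E2] := MVT_derive1 (partial1 h xi) y0 k k0 (dh12 xi).
have [eta' eta'I E3] := MVT_derive1 (fun t => h (x0 + k) t - h x0 t) y0 k k0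
  (fun y => derivableB (dh2 (x0 + k) y) (dh2 x0 y)).
have [xi' xi'I E4] := MVT_derive1 (partial2 h ^~ eta') x0 k k0 (fun x => dh21 x eta').
exists xi, eta, xi', eta'; split; [exact: xiI | exact: etaI | exact: xi'I | exact: eta'I |].
have D1 : derive1 (fun t => h t (y0 + k) - h t y0) xi =
    partial1 h xi (y0 + k) - partial1 h xi y0 := derive1B (dh1 _ _) (dh1 _ _).
have D3 : derive1 (fun t => h (x0 + k) t - h x0 t) eta' =
    partial2 h (x0 + k) eta' - partial2 h x0 eta' := derive1B (dh2 _ _) (dh2 _ _).
have E13 : derive1 (fun t => h t (y0 + k) - h t y0) xi * k =
    derive1 (fun t => h (x0 + k) t - h x0 t) eta' * k by rewrite -E1 -E3; ring.
rewrite D1 D3 E2 E4 in E13.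
exact: (mulIf (lt0r_neq0 k0) (mulIf (lt0r_neq0 k0) E13)).
Qed.

Lemma partial1_partial2C x0 y0 :
  continuous (fun q : R * R => partial2 (partial1 h) q.1 q.2) ->
  continuous (fun q : R * R => partial1 (partial2 h) q.1 q.2) ->
  partial1 (partial2 h) x0 y0 = partial2 (partial1 h) x0 y0.
Proof.
move=> c21 c12; apply/eqP; rewrite -subr_eq0 -normr_le0.
apply/ler_addgt0Pr => e e0; rewrite add0r.
have e2 : 0 < e / 2 by rewrite divr_gt0.
have [d d0 near_p] := (nbhs_ballP _ _).1 (filterI
  (cvgr_dist_lt _ _ (c21 (x0, y0)) _ e2) (cvgr_dist_lt _ _ (c12 (x0, y0)) _ e2)).
have [xi [eta [xi' [eta' [xiI etaI xi'I eta'I E]]]]] := mixed_partials_square x0 y0 d d0.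
have [lt21 _] := near_p (xi, eta) (conj (in_itv_ball xiI) (in_itv_ball etaI)).
have [_ lt12] := near_p (xi', eta') (conj (in_itv_ball xi'I) (in_itv_ball eta'I)).
rewrite /= E distrC in lt21; rewrite /= in lt12.
apply: le_trans (ler_distD (partial1 (partial2 h) xi' eta') _ _) _.
rewrite [e]splitr.
exact: ltW (ltrD lt12 lt21).
Qed.

End Rectangle.

End MixedPartials.

Section Smoothness.
Context {R : realType}.
Implicit Types (f : R -> R -> R).

Lemma smooth2_iter_partial s f : smooth2 f -> smooth2 (iter_partial s f).
Proof.
have iter_cat s' : iter_partial s' (iter_partial s f) = iter_partial (s' ++ s) f.
  by elim: s' => //= c s' ->.
by move=> sf s'; rewrite iter_cat; exact: sf.
Qed.

Lemma smooth2_partial1 {f} : smooth2 f -> smooth2 (partial1 f).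
Proof. exact: (smooth2_iter_partial [:: true]). Qed.

Lemma smooth2_partial2 {f} : smooth2 f -> smooth2 (partial2 f).
Proof. exact: (smooth2_iter_partial [:: false]). Qed.

Lemma smooth2_derivable1 {f} : smooth2 f -> forall x y, derivable (f ^~ y) x 1.
Proof. by move=> sf x y; have [/(_ x y)[]] := sf [::]. Qed.

Lemma smooth2_derivable2 {f} : smooth2 f -> forall x y, derivable (f x) y 1.
Proof. by move=> sf x y; have [/(_ x y)[]] := sf [::]. Qed.

Lemma smooth2_partialC f x y : smooth2 f ->
  partial1 (partial2 f) x y = partial2 (partial1 f) x y.
Proof.
move=> sf; apply: partial1_partial2C.
- exact: smooth2_derivable1.
- exact: smooth2_derivable2.
- exact/smooth2_derivable2/smooth2_partial1.
- exact/smooth2_derivable1/smooth2_partial2.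
- exact: (sf [:: false; true]).2.
- exact: (sf [:: true; false]).2.
Qed.

End Smoothness.

Section Frame.
Context {R : realType}.
Implicit Types (h : R -> R -> R).

Lemma derive1_affine (c c1 c2 c3 : R) (h1 h2 h3 : R -> R) x :
  derivable h1 x 1 -> derivable h2 x 1 -> derivable h3 x 1 ->
  derive1 (fun t => c + c1 * h1 t + c2 * h2 t + c3 * h3 t) x =
  c1 * derive1 h1 x + c2 * derive1 h2 x + c3 * derive1 h3 x.
Proof.
move=> /derivableP d1 /derivableP d2 /derivableP d3; rewrite !derive1E.
apply: derive_val.
have -> : c1 * 'D_1 h1 x + c2 * 'D_1 h2 x + c3 * 'D_1 h3 x =
  0 + c1 *: 'D_1 h1 x + c2 *: 'D_1 h2 x + c3 *: 'D_1 h3 x by rewrite add0r.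
by apply: is_deriveD; apply: is_deriveD; apply: is_deriveD.
Qed.

Lemma derive1_expR2M (k : R -> R) y : derivable k y 1 ->
  derive1 (fun t => expR (2 * t) * k t) y = expR (2 * y) * (2 * k y + derive1 k y).
Proof.
move=> /derivableP dk; rewrite !derive1E; apply: derive_val.
by apply: trigger_derive; rewrite /GRing.scale /=; ring.
Qed.

Lemma frameD_affine i (c c1 c2 c3 : R) h1 h2 h3 x y :
  smooth2 h1 -> smooth2 h2 -> smooth2 h3 ->
  frameD i (fun x y => c + c1 * h1 x y + c2 * h2 x y + c3 * h3 x y) x y =
  c1 * frameD i h1 x y + c2 * frameD i h2 x y + c3 * frameD i h3 x y.
Proof.
move=> s1 s2 s3; case: i; rewrite /frameD /partial1 /partial2 derive1_affine;
  by [ring | exact: smooth2_derivable1 | exact: smooth2_derivable2].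
Qed.

Lemma frameD_eq0 {h} i x y : (forall x y, h x y = 0) -> frameD i h x y = 0.
Proof.
move=> h0; have -> : h = fun _ _ => 0 by apply/funext => ?; apply/funext => ?.
by case: i; rewrite /frameD /partial1 /partial2 derive1_cst ?oppr0 ?mulr0.
Qed.

Lemma frameD_bracket {h} x y : smooth2 h ->
  frameD true (frameD false h) x y =
  frameD false (frameD true h) x y + 2 * frameD true h x y.
Proof.
move=> sh; rewrite /frameD.
have -> : partial1 (fun x y => - partial2 h x y) x y = - partial1 (partial2 h) x y.
  have /derivableP dh := smooth2_derivable1 (smooth2_partial2 sh) x y.
  by rewrite /partial1 !derive1E; apply: derive_val.
rewrite smooth2_partialC // /partial2 derive1_expR2M; last first.
  exact/smooth2_derivable2/smooth2_partial1.
rewrite /partial2; ring.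
Qed.

End Frame.

Section KillingSystem.
Context {R : realType}.
Variables (a b s t r : R) (f g : R -> R -> R).
Hypotheses (sf : smooth2 f) (sg : smooth2 g).

(* [partial2 f] is the only first derivative of beta left undetermined by the
   Killing equation, so the system closes up on combinations of f, g and it. *)
Definition aff (c cf cg cp : R) : R -> R -> R :=
  fun x y => c + cf * f x y + cg * g x y + cp * partial2 f x y.

Lemma frameD_aff i c cf cg cp x y : frameD i (aff c cf cg cp) x y =
  cf * frameD i f x y + cg * frameD i g x y + cp * frameD i (partial2 f) x y.
Proof. exact: frameD_affine (smooth2_partial2 sf). Qed.

Lemma wf_aff : frameD false f = aff 0 0 0 (- 1).
Proof. by apply/funext => x; apply/funext => y; rewrite /aff /frameD; ring. Qed.

Hypothesis uf : frameD true f = aff s (3 + a) (- a) 0.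
Hypothesis wg : frameD false g = aff r (a + b - 1) (2 - a) 0.
Hypothesis ug : frameD true g = aff (2 * t) (2 * a - 2) (6 - 2 * a) 1.

Lemma up_aff : frameD true (partial2 f) =
  aff (- 2 * s + a * r) (a ^+ 2 + a * b - 3 * a - 6) (4 * a - a ^+ 2) (3 + a).
Proof.
apply/funext => x; apply/funext => y.
have := frameD_bracket x y sf.
rewrite wf_aff uf !frameD_aff wg wf_aff /aff.
lra.
Qed.

Lemma wp_aff : frameD false (partial2 f) =
  aff ((a + b - 1) * s - 2 * a * t + (2 * a - 6) * r) ((a - 1) * (a + 3 * b - 3))
      (5 * a - a ^+ 2 - a * b - 12) (a - 2).
Proof.
apply/funext => x; apply/funext => y.
have := frameD_bracket x y sg.
rewrite wg ug !frameD_aff uf ug wg wf_aff up_aff /aff.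
lra.
Qed.

Lemma u_aff c cf cg cp : frameD true (aff c cf cg cp) =
  aff (cf * s + cg * (2 * t) + cp * (- 2 * s + a * r))
      (cf * (3 + a) + cg * (2 * a - 2) + cp * (a ^+ 2 + a * b - 3 * a - 6))
      (- cf * a + cg * (6 - 2 * a) + cp * (4 * a - a ^+ 2)) (cg + cp * (3 + a)).
Proof.
apply/funext => x; apply/funext => y.
by rewrite frameD_aff uf ug up_aff /aff; ring.
Qed.

Lemma w_aff c cf cg cp : frameD false (aff c cf cg cp) =
  aff (cg * r + cp * ((a + b - 1) * s - 2 * a * t + (2 * a - 6) * r))
      (cg * (a + b - 1) + cp * ((a - 1) * (a + 3 * b - 3)))
      (cg * (2 - a) + cp * (5 * a - a ^+ 2 - a * b - 12)) (- cf + cp * (a - 2)).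
Proof.
apply/funext => x; apply/funext => y.
by rewrite frameD_aff wf_aff wg wp_aff /aff; ring.
Qed.

Lemma partial2f_relation x y :
  aff ((4 * a + 3 * b - a * b - 7) * s + (12 - 8 * a + a * b) * t + (4 * a - 9) * r)
      (12 * a + 3 * a * b - 24) (18 - 12 * a) 12 x y = 0.
Proof.
have := frameD_bracket x y (smooth2_partial2 sf).
rewrite wp_aff up_aff u_aff w_aff /aff.
lra.
Qed.

Hypothesis hab : a * b = 0.

(* The derivatives of [partial2f_relation] along u and w, with [partial2 f]
   eliminated; ab = 0 is what makes it drop out of the second one. *)
Lemma integrability_conditions x y :
  (11 + 4 * a + 9 * b) * s + (12 - 8 * a) * t + (4 * a - 27) * r
    + (48 + 12 * a) * f x y - (18 + 12 * a) * g x y = 0 /\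
  (2 * a + 2 * b - 2) * s - 4 * a * t + (2 * a - 9) * r
    + (3 - 3 * a - 3 * b) * f x y + (3 * a - 18) * g x y = 0.
Proof.
have rel := partial2f_relation x y.
have := frameD_eq0 true x y partial2f_relation; rewrite u_aff.
have := frameD_eq0 false x y partial2f_relation; rewrite w_aff.
move: rel; rewrite /aff.
have /orP[/eqP->|/eqP->] : (a == 0) || (b == 0) by rewrite -mulf_eq0 hab.
  by move=> *; split; lra.
by move=> *; split; lra.
Qed.

End KillingSystem.

Arguments integrability_conditions {R a b s t r f g}.

Lemma killing_frame_system {R : realType} {a b : R} {S : bool -> bool -> R} {f g} :
  (forall i j x y, killing a b f g i j x y = S i j) ->
  [/\ frameD true f = aff f g (S true true) (3 + a) (- a) 0,
      frameD false g = aff f g (S false false) (a + b - 1) (2 - a) 0 &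
      frameD true g = aff f g (2 * S true false) (2 * a - 2) (6 - 2 * a) 1].
Proof.
move=> Hk; split; apply/funext => x; apply/funext => y; rewrite /aff.
- by have := Hk true true x y; rewrite /killing /covD /=; lra.
- by have := Hk false false x y; rewrite /killing /covD /=; lra.
- by have := Hk true false x y; rewrite /killing /covD /frameD /=; lra.
Qed.

Lemma killing_cst_eq {R : realType} (a b al1 al2 : R) (S : bool -> bool -> R) :
  (forall i j, S i j = S j i) ->
  - (3 + a) * al1 + a * al2 = S true true ->
  (1 - a) * al1 + (a - 3) * al2 = S true false ->
  (1 - a - b) * al1 + (a - 2) * al2 = S false false ->
  forall i j x y, killing a b (fun _ _ => al1) (fun _ _ => al2) i j x y = S i j.
Proof.
move=> Ssym S11 S12 S22 [] [] x y; rewrite ?[S false true]Ssym;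
  rewrite /killing /covD /frameD /partial1 /partial2 /= !derive1_cst; lra.
Qed.

Lemma linear2_unique {F : fieldType} {m11 m12 m21 m22 u1 u2 v1 v2 : F} :
  m11 * m22 - m12 * m21 != 0 ->
  m11 * u1 + m12 * u2 = m11 * v1 + m12 * v2 ->
  m21 * u1 + m22 * u2 = m21 * v1 + m22 * v2 -> u1 = v1 /\ u2 = v2.
Proof.
move=> det e1 e2; split; apply: (mulIf det).
- transitivity (m22 * (m11 * u1 + m12 * u2) - m12 * (m21 * u1 + m22 * u2)); first by ring.
  by rewrite e1 e2; ring.
- transitivity (m11 * (m21 * u1 + m22 * u2) - m21 * (m11 * u1 + m12 * u2)); first by ring.
  by rewrite e1 e2; ring.
Qed.

Lemma cst_of_integrability {R : realType} {a b s t r : R} {f g : R -> R -> R} :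
  a * b = 0 -> 45 + 5 * a + 3 * b != 0 ->
  (forall x y,
    (11 + 4 * a + 9 * b) * s + (12 - 8 * a) * t + (4 * a - 27) * r
      + (48 + 12 * a) * f x y - (18 + 12 * a) * g x y = 0 /\
    (2 * a + 2 * b - 2) * s - 4 * a * t + (2 * a - 9) * r
      + (3 - 3 * a - 3 * b) * f x y + (3 * a - 18) * g x y = 0) ->
  forall x y, f x y = f 0 0 /\ g x y = g 0 0.
Proof.
move=> hab det_neq0 rel x y.
have det : (48 + 12 * a) * (3 * a - 18) - (- (18 + 12 * a)) * (3 - 3 * a - 3 * b) != 0.
  have -> : (48 + 12 * a) * (3 * a - 18) - (- (18 + 12 * a)) * (3 - 3 * a - 3 * b) =
    - 18 * (45 + 5 * a + 3 * b) - 36 * (a * b) by ring.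
  by rewrite hab mulr0 subr0 mulf_neq0 // oppr_eq0 pnatr_eq0.
have [P Q] := rel x y; have [P0 Q0] := rel 0 0.
by apply: (linear2_unique det); lra.
Qed.

Theorem lemma12p5 (R : realType) (a b : R) (hab : a * b = 0)
  (S : bool -> bool -> R) (Ssym : forall i j, S i j = S j i) :
  (exists f g : R -> R -> R, smooth2 f /\ smooth2 g /\
     forall i j x y, killing a b f g i j x y = S i j) ->
  exists alpha1 alpha2 : R,
     forall i j x y,
       killing a b (fun _ _ => alpha1) (fun _ _ => alpha2) i j x y = S i j.
Proof.
move=> [f [g [sf [sg Hk]]]].
have [uf wg ug] := killing_frame_system Hk.
have rel := integrability_conditions sf sg uf wg ug hab.
have [det0|det_neq0] := eqVneq (45 + 5 * a + 3 * b) 0.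
  (* At a single point, a combination of the two conditions eliminates f and g
     and leaves the linear condition on S satisfied by the invariant forms. *)
  have [P0 Q0] := rel 0 0.
  have /orP[/eqP a0|/eqP b0] : (a == 0) || (b == 0) by rewrite -mulf_eq0 hab.
    have b15 : b = -15 by rewrite a0 in det0; lra.
    rewrite a0 b15 in P0 Q0 *.
    exists (- S true true / 3), (- (S true true + 3 * S true false) / 9).
    by apply: killing_cst_eq => //; lra.
  have a9 : a = -9 by rewrite b0 in det0; lra.
  rewrite a9 b0 in P0 Q0 *.
  exists ((3 * S true false - 4 * S true true) / 6),
         ((3 * S true false - 5 * S true true) / 9).
  by apply: killing_cst_eq => //; lra.
have fg_cst := cst_of_integrability hab det_neq0 rel.
exists (f 0 0), (g 0 0).
have -> : (fun _ _ => f 0 0) = f by apply/funext => x; apply/funext => y; rewrite (fg_cst x y).1.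
have -> : (fun _ _ => g 0 0) = g by apply/funext => x; apply/funext => y; rewrite (fg_cst x y).2.
exact: Hk.
Qed.
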